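(* Let $p\ge1$ be an integer, let $N$ be a $p$-rooted almost-binary phylogenetic network on $X$, let $\mathcal{Z}=\{Z_1,\dots,Z_d\}$ be the set of maximal zig-zag trails of $N$ (whose edge-sets partition $E(N)$), and let $\mathcal{X}\in\{\mathcal{A},\mathcal{B},\mathcal{C}\}$. Then: (1) The map $S\mapsto (V(N),S)$ is a one-to-one correspondence between the family of $\mathcal{X}$-admissible subsets $S$ of $E(N)$ and the family $\mathcal{X}_N$ of support networks of $N$. (2) For $S\subseteq E(N)$, the spanning subgraph $(V(N),S)$ belongs to $\mathcal{X}_N$ if and only if $S\cap E(Z_i)$ is an $\mathcal{X}$-admissible subset of $E(Z_i)$ for every $i\in[1,d]$. (3) Identifying support networks with their edge-sets, $\mathcal{X}_N=\prod_{i=1}^d \mathcal{S}_{\mathcal{X}}(Z_i)$ (i.e., $\mathcal{X}_N=\{S_1\cup\dots\cup S_d : S_i\in\mathcal{S}_{\mathcal{X}}(Z_i)\}$), for any ordering $(Z_1,\dots,Z_d)$ of $\mathcal{Z}$. (4) $|\mathcal{X}_N|=\prod_{i=1}^d|\mathcal{S}_{\mathcal{X}}(Z_i)|$.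
   Context: A $p$-rooted almost-binary phylogenetic network on a non-empty finite set $X$ is a finite simple directed acyclic graph $N$ with exactly $p$ vertices of in-degree $0$ and out-degree $1$ or $2$ (roots), whose set of vertices of in-degree $1$ and out-degree $0$ is exactly $X$ (leaves), and every other vertex has in-degree and out-degree in $\{1,2\}$. A zig-zag trail is a connected subgraph $Z$ of $N$ with $m\ge1$ edges admitting an ordering $(e_1,\dots,e_m)$ of $E(Z)$ with $\mathrm{head}(e_i)=\mathrm{head}(e_{i+1})$ or $\mathrm{tail}(e_i)=\mathrm{tail}(e_{i+1})$ for all $i\in[1,m-1]$; it is maximal if not properly contained in another zig-zag trail. A support network of $N$ is a spanning subgraph $G$ of $N$ (i.e., $V(G)=V(N)$) that is itself a $p$-rooted almost-binary phylogenetic network on $X$; it is minimal if no support network of $N$ is a proper subgraph of $G$, and minimum if it has the minimum number of edges among all support networks of $N$. $\mathcal{A}_N,\mathcal{B}_N,\mathcal{C}_N$ denote the families of all, minimal, and minimum support networks of $N$, respectively. For a subgraph $Z$ of $N$, a subset $S\subseteq E(Z)$ is $\mathcal{A}$-admissible if (C1) every edge $(u,v)\in E(Z)$ with $\mathrm{outdeg}_N(u)=1$ or $\mathrm{indeg}_N(v)=1$ lies in $S$, and (C2) for any two distinct edges $e_1,e_2\in E(Z)$ with $\mathrm{tail}(e_1)=\mathrm{tail}(e_2)$ or $\mathrm{head}(e_1)=\mathrm{head}(e_2)$, at least one of $e_1,e_2$ lies in $S$. An $\mathcal{A}$-admissible $S$ is $\mathcal{B}$-admissible if no proper subset of $S$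 is $\mathcal{A}$-admissible, and $\mathcal{C}$-admissible if it has minimum cardinality among all $\mathcal{A}$-admissible subsets of $E(Z)$. $\mathcal{S}_{\mathcal{X}}(Z)$ denotes the family of $\mathcal{X}$-admissible subsets of $E(Z)$. *)

From mathcomp Require Import all_boot.
Set Implicit Arguments. Unset Strict Implicit. Unset Printing Implicit Defensive.

(* A directed graph on the finite vertex type V is given by its edge set
   E : {set V * V}; an edge (u,v) has tail u = e.1 and head v = e.2.
   Subgraphs / spanning subgraphs are identified with edge subsets. *)

Section Net.
Variable V : finType.
Implicit Types (E F S : {set V * V}) (X : {set V}).

Definition edge_rel E : rel V := fun u v => (u, v) \in E.
Definition indeg E v := #|[set e in E | e.2 == v]|.
Definition outdeg E u := #|[set e in E | e.1 == u]|.

Definition acyclicb E :=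
  [forall u, forall v, ((u, v) \in E) ==> ~~ connect (edge_rel E) v u].

Definition in12 (n : nat) := (n == 1) || (n == 2).
Definition is_root E v := (indeg E v == 0) && in12 (outdeg E v).
Definition is_leaf E v := (indeg E v == 1) && (outdeg E v == 0).

(* p-rooted almost-binary phylogenetic network on X, vertex set = all of V *)
Definition is_network (p : nat) X E :=
  [&& acyclicb E, X != set0,
      #|[set v | is_root E v]| == p,
      [set v | is_leaf E v] == X &
      [forall v, [|| is_root E v, is_leaf E v |
                   in12 (indeg E v) && in12 (outdeg E v)]]].

Inductive kind := KA | KB | KC.

Definition suppA (p : nat) X E : {set {set V * V}} :=
  [set S : {set V * V} | (S \subset E) && is_network p X S].
Definition supp_family (p : nat) X E (k : kind) : {set {set V * V}} :=
  match k with
  | KA => suppA p X E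
  | KB => [set S in suppA p X E |
             [forall S' : {set V * V}, (S' \proper S) ==> (S' \notin suppA p X E)]]
  | KC => [set S in suppA p X E |
             [forall S' : {set V * V}, (S' \in suppA p X E) ==> (#|S| <= #|S'|)]]
  end.

Definition zz_rel : rel (V * V) := fun e1 e2 => (e1.2 == e2.2) || (e1.1 == e2.1).
Definition is_zigzag E F : Prop :=
  F \subset E /\
  exists s : seq (V * V), [/\ s != [::], uniq s, (forall e, (e \in s) = (e \in F))
                             & sorted zz_rel s].
Definition max_zigzag E F : Prop :=
  is_zigzag E F /\ (forall F', is_zigzag E F' -> F \subset F' -> F' = F).

(* A-admissible subsets S of E(Z) (F = E(Z)); degrees are taken in N *)
Definition admA E F S :=
  [&& S \subset F,
      [forall e in F, ((outdeg E e.1 == 1) || (indeg E e.2 == 1)) ==> (e \in S)] &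
      [forall e1 in F, forall e2 in F,
         ((e1 != e2) && ((e1.1 == e2.1) || (e1.2 == e2.2))) ==>
         ((e1 \in S) || (e2 \in S))]].
Definition adm_family E F (k : kind) : {set {set V * V}} :=
  match k with
  | KA => [set S : {set V * V} | admA E F S]
  | KB => [set S : {set V * V} | admA E F S &&
             [forall S' : {set V * V}, (S' \proper S) ==> ~~ admA E F S']]
  | KC => [set S : {set V * V} | admA E F S &&
             [forall S' : {set V * V}, admA E F S' ==> (#|S| <= #|S'|)]]
  end.

End Net.

From mathcomp Require Import all_boot.
From mathcomp Require Import zify.
From Stdlib Require Import Classical.
Set Implicit Arguments. Unset Strict Implicit. Unset Printing Implicit Defensive.

(* A spanning subgraph S of the network N is again a network exactly when no
   vertex loses all of its in-edges or all of its out-edges: then the type of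
   every vertex is unchanged, and the numbers of roots and the leaf set force
   this conversely.  As all degrees are at most 2, that covering condition
   says that a sole in- or out-edge is kept and that of two edges sharing a
   head or a tail one is kept, which is A-admissibility of S in E(N).
   Two edges sharing a head or a tail lie in one maximal zig-zag trail, and
   the degree bound gives every edge at most two such neighbours besides
   itself, so zig-zag trails meeting in an edge merge and the maximal ones
   partition E(N).  Hence admissibility is checked trail by trail; for the
   minimal and minimum families one compares S with the set obtained by
   replacing its part on a single trail.  The trails being disjoint, the
   union map from tuples of local solutions is injective. *)

Lemma card_ge3 (T : finType) (D : {set T}) a b c :
  a \in D -> b \in D -> c \in D -> a != b -> a != c -> b != c -> 3 <= #|D|.
Proof.
move=> aD bD cD ab ac bc.
have -> : 3 = #|a |: (b |: [set c])|.
  by rewrite !cardsU1 cards1 !inE (negbTE ab) (negbTE ac) (negbTE bc).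
by apply: subset_leq_card; apply/subsetP=> x; rewrite !inE => /or3P[]/eqP->.
Qed.

Lemma meets_small (T : finType) (D S : {set T}) : #|D| <= 2 ->
  (D != set0 -> D :&: S != set0) <->
  (#|D| = 1 -> D \subset S) /\ {in D &, forall x y, x != y -> (x \in S) || (y \in S)}.
Proof.
move=> le2; split.
- move=> meet; split.
  + move=> /eqP/cards1P[x defD].
    have /set0Pn[y] : D :&: S != set0.
      by apply: meet; rewrite defD; apply/set0Pn; exists x; rewrite inE.
    by rewrite defD sub1set !inE => /andP[/eqP-> ->].
  + move=> x y xD yD xy; apply/norP => -[xS yS].
    have /set0Pn[z] : D :&: S != set0 by apply: meet; apply/set0Pn; exists x.
    rewrite inE => /andP[zD zS].
    suff : 3 <= #|D| by rewrite ltnNge le2.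
    by apply: (card_ge3 xD yD zD xy);
      [apply: contraNneq xS => -> | apply: contraNneq yS => ->].
- move=> [single pair] /set0Pn[x xD]; apply/set0Pn.
  have [/eqP D1 | Dn1] := boolP (#|D| == 1).
    by exists x; rewrite inE xD (subsetP (single D1)).
  have /set0Pn[y] : D :\ x != set0.
    by rewrite -cards_eq0 (cardsD1 x D) xD add1n in Dn1 *.
  rewrite !inE eq_sym => /andP[xy yD].
  by case/orP: (pair x y xD yD xy) => inS; [exists x | exists y];
    rewrite inE inS ?xD ?yD.
Qed.

(* Patterns (in-degree, out-degree): [is_root E v] is convertible to
   [root_degs (indeg E v) (outdeg E v)], and similarly for the others. *)
Definition root_degs a b := (a == 0) && in12 b.
Definition leaf_degs a b := (a == 1) && (b == 0).
Definition node_degs a b := [|| root_degs a b, leaf_degs a b | in12 a && in12 b].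

Local Ltac unfold_degs := rewrite /node_degs /root_degs /leaf_degs /in12.

Lemma node_degs_le2 x y : node_degs x y -> x <= 2 /\ y <= 2.
Proof. by unfold_degs; case: x => [|[|[|x]]]; case: y => [|[|[|y]]]. Qed.

Lemma node_degs_in0 x y : node_degs x y -> x = 0 -> root_degs x y.
Proof. by unfold_degs; move=> h x0; rewrite x0 in h *; case: y h => [|[|[|y]]]. Qed.

Lemma node_degs_out0 x y : node_degs x y -> y = 0 -> leaf_degs x y.
Proof. by unfold_degs; move=> h y0; rewrite y0 in h *; case: x h => [|[|[|x]]]. Qed.

Lemma node_degs_shrink x y x' y' : x' <= x -> y' <= y ->
  (x != 0 -> x' != 0) -> (y != 0 -> y' != 0) -> node_degs x y ->
  [/\ root_degs x' y' = root_degs x y, leaf_degs x' y' = leaf_degs x y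
    & node_degs x' y'].
Proof.
unfold_degs; case: x => [|[|[|x]]]; case: y => [|[|[|y]]] //;
case: x' => [|[|[|x']]] //; case: y' => [|[|[|y']]] //= _ _ in0 out0;
by [move: (in0 isT) | move: (out0 isT)].
Qed.

Section Networks.
Variable V : finType.
Implicit Types (E S : {set V * V}).

(* [indeg E v] and [outdeg E v] are convertible to [#|fibre snd E v|] and
   [#|fibre fst E v|]. *)
Definition fibre (pi : V * V -> V) E v := [set e in E | pi e == v].

Lemma fibreI pi E S v : S \subset E -> fibre pi S v = fibre pi E v :&: S.
Proof.
move=> sSE; apply/setP => e; rewrite !inE.
by case eS: (e \in S); rewrite ?andbT ?andbF /= ?(subsetP sSE e eS).
Qed.

Lemma fibre_cardS pi E S v : S \subset E -> #|fibre pi S v| <= #|fibre pi E v|.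
Proof. by move=> sSE; rewrite (fibreI _ _ sSE) subset_leq_card ?subsetIl. Qed.

Definition covers E S := forall v,
  (indeg E v != 0 -> indeg S v != 0) /\ (outdeg E v != 0 -> outdeg S v != 0).

Variables (p : nat) (X : {set V}).

Lemma network_node_degs E v : is_network p X E -> node_degs (indeg E v) (outdeg E v).
Proof. by case/and5P=> _ _ _ _ /forallP/(_ v). Qed.

Lemma network_deg_le2 E v : is_network p X E -> indeg E v <= 2 /\ outdeg E v <= 2.
Proof. by move/(network_node_degs v)/node_degs_le2. Qed.

Lemma acyclicS E S : S \subset E -> acyclicb E -> acyclicb S.
Proof.
move=> sSE /forallP acE; apply/forallP=> u; apply/forallP=> w; apply/implyP=> uwS.
move: acE => /(_ u)/forallP/(_ w)/implyP/(_ (subsetP sSE _ uwS)); apply: contra.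
by apply: connect_sub => x y xyS; apply: connect1; apply: (subsetP sSE).
Qed.

Lemma network_covers E S : is_network p X E -> S \subset E -> is_network p X S ->
  covers E S.
Proof.
case/and5P=> _ _ /eqP rootsE /eqP leavesE _ sSE.
case/and5P=> _ _ /eqP rootsS /eqP leavesS /forallP nodeS.
have rootsES : [set v | is_root E v] =i [set v | is_root S v].
  apply/subset_cardP; first by rewrite rootsE rootsS.
  apply/subsetP=> v; rewrite !inE => /andP[/eqP inE0 _].
  apply: node_degs_in0 (nodeS v) _; apply/eqP; rewrite -leqn0 -inE0.
  exact: (fibre_cardS snd v sSE).
move=> v; split; apply: contra_neq => deg0.
- have rootS : is_root S v := node_degs_in0 (nodeS v) deg0.
  by have := rootsES v; rewrite !inE rootS => /andP[/eqP].
- have leafS : is_leaf S v := node_degs_out0 (nodeS v) deg0.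
  by have /setP/(_ v) := leavesE; rewrite -leavesS !inE leafS => /andP[_ /eqP].
Qed.

Lemma covers_network E S : is_network p X E -> S \subset E -> covers E S ->
  is_network p X S.
Proof.
move=> netE sSE cov; have shrink v := node_degs_shrink (fibre_cardS snd v sSE)
  (fibre_cardS fst v sSE) (proj1 (cov v)) (proj2 (cov v)) (network_node_degs v netE).
case/and5P: netE => acE X0 /eqP <- /eqP leavesE _; apply/and5P; split => //.
- exact: acyclicS acE.
- by apply/eqP; apply: eq_card => v; rewrite !inE; case: (shrink v).
- by rewrite -leavesE; apply/eqP/setP => v; rewrite !inE; case: (shrink v).
- by apply/forallP => v; case: (shrink v).
Qed.

Lemma network_subE E S : is_network p X E -> S \subset E ->
  is_network p X S <-> covers E S.
Proof.
by move=> netE sSE; split; [exact: network_covers | exact: covers_network].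
Qed.

Definition fibre_adm pi E S := forall v,
  (#|fibre pi E v| = 1 -> fibre pi E v \subset S) /\
  {in fibre pi E v &, forall x y, x != y -> (x \in S) || (y \in S)}.

Lemma fibre_adm_covers pi E S : (forall v, #|fibre pi E v| <= 2) -> S \subset E ->
  fibre_adm pi E S <-> forall v, #|fibre pi E v| != 0 -> #|fibre pi S v| != 0.
Proof.
move=> le2 sSE; split=> h v;
by have := meets_small S (le2 v); rewrite -!cards_eq0 -fibreI // => meets;
  apply/meets/h.
Qed.

Lemma admA_fibres E S :
  admA E E S <-> [/\ S \subset E, fibre_adm fst E S & fibre_adm snd E S].
Proof.
split.
- case/and3P=> sSE /forall_inP forced /forall_inP pairs.
  have fibreE pi e v : (e \in fibre pi E v) = (e \in E) && (pi e == v) by rewrite inE.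
  split=> // v; split.
  + move=> one; apply/subsetP=> e; rewrite fibreE => /andP[eE /eqP ev].
    by apply: (implyP (forced e eE)); rewrite ev; apply/orP; left; apply/eqP.
  + move=> e1 e2; rewrite !fibreE => /andP[e1E /eqP<-] /andP[e2E /eqP e12] ne.
    by move/forall_inP/(_ e2 e2E)/implyP: (pairs e1 e1E); apply; rewrite ne e12 eqxx.
  + move=> one; apply/subsetP=> e; rewrite fibreE => /andP[eE /eqP ev].
    by apply: (implyP (forced e eE)); rewrite ev; apply/orP; right; apply/eqP.
  + move=> e1 e2; rewrite !fibreE => /andP[e1E /eqP<-] /andP[e2E /eqP e12] ne.
    move/forall_inP/(_ e2 e2E)/implyP: (pairs e1 e1E).
    by apply; rewrite ne e12 eqxx orbT.
- case=> sSE adm1 adm2; apply/and3P; split => //.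
  + apply/forall_inP => e eE; apply/implyP => /orP[]/eqP one.
    * by apply: (subsetP ((adm1 e.1).1 one)); rewrite inE eE eqxx.
    * by apply: (subsetP ((adm2 e.2).1 one)); rewrite inE eE eqxx.
  + apply/forall_inP => e1 e1E; apply/forall_inP => e2 e2E.
    apply/implyP => /andP[ne /orP[]/eqP e12].
    * by apply: (adm1 e1.1).2 ne; rewrite inE ?e12 ?e1E ?e2E eqxx.
    * by apply: (adm2 e1.2).2 ne; rewrite inE ?e12 ?e1E ?e2E eqxx.
Qed.

Lemma admA_covers E S : is_network p X E ->
  admA E E S <-> S \subset E /\ covers E S.
Proof.
move=> netE; rewrite admA_fibres.
have le_in v : #|fibre snd E v| <= 2 := (network_deg_le2 v netE).1.
have le_out v : #|fibre fst E v| <= 2 := (network_deg_le2 v netE).2.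
split=> [[sSE adm_out adm_in] | [sSE cov]].
- split=> // v; split.
  + exact: (fibre_adm_covers le_in sSE).1 adm_in v.
  + exact: (fibre_adm_covers le_out sSE).1 adm_out v.
- split=> //.
  + by apply/(fibre_adm_covers le_out sSE) => v; case: (cov v).
  + by apply/(fibre_adm_covers le_in sSE) => v; case: (cov v).
Qed.

Lemma suppA_admA E : is_network p X E -> suppA p X E = [set S | admA E E S].
Proof.
move=> netE; apply/setP=> S; rewrite !inE; apply/andP/idP.
- by case=> sSE /(network_subE netE sSE) cov; apply/(admA_covers _ netE).
- by move/(admA_covers _ netE) => [sSE /(network_subE netE sSE)].
Qed.

Lemma supp_family_adm E k : is_network p X E -> supp_family p X E k = adm_family E E k.
Proof.
move=> netE; case: k => /=; rewrite (suppA_admA netE) //; apply/setP=> S; rewrite !inE;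
by congr (_ && _); apply: eq_forallb => S'; rewrite !inE.
Qed.

End Networks.

Lemma sorted_cross (T : eqType) (r : rel T) (P : pred T) s a b : symmetric r ->
  sorted r s -> a \in s -> P a -> b \in s -> ~~ P b ->
  exists x y, [/\ x \in s, y \in s, P x, ~~ P y & r x y].
Proof.
move=> r_sym; elim: s a b => // h [|h' t] IH a b.
  by rewrite !inE => _ /eqP-> Ph /eqP->; rewrite Ph.
case/andP=> rhh' sorted_t aIn + bIn.
have [Phh' | Phh'] := eqVneq (P h) (P h'); last first.
  case Ph: (P h); case Ph': (P h'); rewrite Ph Ph' in Phh' => //.
  - by exists h, h'; rewrite !inE !eqxx orbT Ph Ph'.
  - by exists h', h; rewrite !inE !eqxx orbT Ph Ph' r_sym.
have shift z : z \in [:: h, h' & t] -> exists2 z', z' \in h' :: t & P z' = P z.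
  by rewrite inE => /orP[/eqP-> | zIn]; [exists h'; rewrite ?inE ?eqxx | exists z].
have [a' a'In <-] := shift a aIn; have [b' b'In <-] := shift b bIn => Pa Pb.
have [x [y [xIn yIn Px Py rxy]]] := IH a' b' sorted_t a'In Pa b'In Pb.
by exists x, y; split; rewrite // in_cons ?xIn ?yIn orbT.
Qed.

Section Trails.
Variables (V : finType) (E : {set V * V}).
Hypothesis deg_le2 : forall v, indeg E v <= 2 /\ outdeg E v <= 2.
Implicit Types (F G M S T : {set V * V}).
Local Notation zz := (@zz_rel V).

Lemma zz_relC : symmetric zz.
Proof. by move=> a b; rewrite /zz_rel eq_sym [b.1 == _]eq_sym. Qed.

Lemma zz_nbrs_le2 x : x \in E -> #|[set y in E | zz x y] :\ x| <= 2.
Proof.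
move=> xE; set A := fibre snd E x.2; set B := fibre fst E x.1.
have xAB : x \in A :&: B by rewrite !inE xE !eqxx.
have AB_le4 : #|A :|: B| + #|A :&: B| <= 4.
  by rewrite cardsUI (leq_add (deg_le2 _).1 (deg_le2 _).2).
have : #|[set y in E | zz x y]| <= #|A :|: B|.
  apply/subset_leq_card/subsetP => y; rewrite !inE.
  by case/andP=> -> /orP[]/eqP->; rewrite eqxx ?orbT.
have : 0 < #|A :&: B| by apply/card_gt0P; exists x.
have xN : x \in [set y in E | zz x y] by rewrite inE xE /zz_rel !eqxx.
have := cardsD1 x [set y in E | zz x y]; rewrite xN; lia.
Qed.

(* An interior edge of a trail already has two zig-zag neighbours on it, so the
   degree bound leaves no room for a third one. *)
Lemma zz_attach_at_end s1 x s2 y :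
  uniq (s1 ++ x :: s2) -> sorted zz (s1 ++ x :: s2) ->
  {subset s1 ++ x :: s2 <= E} -> y \in E -> y \notin s1 ++ x :: s2 -> zz x y ->
  s1 = [::] \/ s2 = [::].
Proof.
case: s1 => [|a0 s1]; first by left.
case: s2 => [|b s2]; first by right.
move=> uniq_s sorted_s sE yE yN xy; exfalso; set a := last a0 s1.
have aIn : a \in a0 :: s1 := mem_last a0 s1.
have inS z : z \in a0 :: s1 \/ z \in [:: x, b & s2] ->
    z \in (a0 :: s1) ++ [:: x, b & s2].
  by rewrite mem_cat => -[] ->; rewrite ?orbT.
move: sorted_s; rewrite /= cat_path => /andP[_ /= /and3P[ax xb _]].
move: uniq_s; rewrite cat_uniq => /and3P[_ /hasPn disj /andP[xNbs _]].
have xIn : x \in [:: x, b & s2] := mem_head _ _.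
have bIn : b \in [:: x, b & s2] by rewrite !inE eqxx orbT.
have ne_yz z : z \in (a0 :: s1) ++ [:: x, b & s2] -> y != z.
  by move=> zIn; apply: contraNneq yN => ->.
have ne_ax : a != x by apply: contraNneq (disj x xIn) => <-.
have ne_ab : a != b by apply: contraNneq (disj b bIn) => <-.
have ne_bx : b != x by apply: contraNneq xNbs => ->; apply: mem_head.
have inN z : z \in (a0 :: s1) ++ [:: x, b & s2] -> z != x -> zz x z ->
    z \in [set z in E | zz x z] :\ x.
  by move=> zIn zx xz; rewrite !inE zx xz sE.
suff : 3 <= #|[set z in E | zz x z] :\ x|.
  by rewrite ltnNge zz_nbrs_le2 // sE // inS //; right.
apply: (@card_ge3 _ _ a b y) => //.
- by apply: inN => //; [apply: inS; left | rewrite zz_relC].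
- by apply: inN => //; apply: inS; right.
- by rewrite !inE yE xy ne_yz ?inS //; right.
- by rewrite eq_sym ne_yz ?inS //; left.
- by rewrite eq_sym ne_yz ?inS //; right.
Qed.

Lemma zz_seq_attach s x y : uniq s -> sorted zz s -> {subset s <= E} ->
  y \in E -> y \notin s -> x \in s -> zz x y ->
  exists s', [/\ uniq s', sorted zz s' & s' =i y :: s].
Proof.
move=> uniq_s sorted_s sE yE yN /splitPr xIn; case: xIn uniq_s sorted_s sE yN => s1 s2.
move=> uniq_s sorted_s sE yN xy.
case: (zz_attach_at_end uniq_s sorted_s sE yE yN xy) => [s1_nil | s2_nil].
- rewrite {}s1_nil /= in uniq_s sorted_s yN *.
  exists [:: y, x & s2]; split => //; first by rewrite /= yN.
  by rewrite /= zz_relC xy.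
- rewrite {}s2_nil in uniq_s sorted_s yN *.
  exists (rcons (s1 ++ [:: x]) y); split.
  + by rewrite rcons_uniq yN.
  + by rewrite -cats1 -catA sorted_cat_cons /= xy -cats1 sorted_s.
  + by move=> e; rewrite mem_rcons.
Qed.

Lemma zigzag_setU1 F x y : is_zigzag E F -> y \in E -> x \in F -> zz x y ->
  is_zigzag E (y |: F).
Proof.
move=> zF yE xF xy; have [yF | yNF] := boolP (y \in F).
  by rewrite (setUidPr _) ?sub1set.
case: zF => sFE [s [_ uniq_s sF sorted_s]].
have sE : {subset s <= E} by move=> e; rewrite sF => /(subsetP sFE).
have yNs : y \notin s by rewrite sF.
have xs : x \in s by rewrite sF.
have [s' [uniq_s' sorted_s' s'E]] := zz_seq_attach uniq_s sorted_s sE yE yNs xs xy.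
split; first by rewrite subUset sub1set yE sFE.
exists s'; split => //; last by move=> e; rewrite s'E !inE sF.
by apply/eqP => s'0; have := s'E y; rewrite s'0 mem_head.
Qed.

Lemma zigzag_setU F1 F2 : is_zigzag E F1 -> is_zigzag E F2 -> F1 :&: F2 != set0 ->
  is_zigzag E (F1 :|: F2).
Proof.
move=> + zF2; move: {2}#|F2 :\: F1| (leqnn #|F2 :\: F1|) => n.
elim: n F1 => [|n IH] F1 le_n zF1 /set0Pn[a].
  by move: le_n; rewrite leqn0 cards_eq0 setD_eq0 => /setUidPl->.
rewrite inE => /andP[aF1 aF2].
have [/setUidPl-> // | /subsetPn[b bF2 bNF1]] := boolP (F2 \subset F1).
case: (zF2) => sF2E [s [_ _ sF2 sorted_s]].
have [x [y [xs ys xF1 yNF1 xy]]] := sorted_cross (P := mem F1) zz_relC sorted_s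
  (etrans (sF2 a) aF2) aF1 (etrans (sF2 b) bF2) bNF1.
rewrite sF2 in ys.
have -> : F1 :|: F2 = (y |: F1) :|: F2.
  by rewrite -setUA; apply/esym/setUidPr; rewrite sub1set inE ys orbT.
apply: IH; last by apply/set0Pn; exists a; rewrite !inE aF1 aF2 orbT.
- have := cardsD1 y (F2 :\: F1); rewrite !inE ys yNF1 add1n => card_y.
  rewrite card_y ltnS in le_n; apply: leq_trans le_n; apply: subset_leq_card.
  by apply/subsetP => e; rewrite !inE negb_or => /andP[/andP[-> ->] ->].
- exact: zigzag_setU1 zF1 (subsetP sF2E y ys) xF1 xy.
Qed.

Lemma zigzag1 e : e \in E -> is_zigzag E [set e].
Proof.
by move=> eE; split; [rewrite sub1set | exists [:: e]; split => // f; rewrite !inE].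
Qed.

Lemma zigzag_neq0 F : is_zigzag E F -> F != set0.
Proof.
case=> _ [s [s_nil _ sF _]]; case: s s_nil sF => [//|x s] _ sF.
by apply/set0Pn; exists x; rewrite -sF mem_head.
Qed.

Lemma max_zigzag_exists F : is_zigzag E F -> exists2 M, max_zigzag E M & F \subset M.
Proof.
have maximal M : is_zigzag E M -> ~ (exists M', is_zigzag E M' /\ M \proper M') ->
    max_zigzag E M.
  move=> zM maxM; split=> // M' zM' sMM'; apply/eqP/negPn/negP => ne; apply: maxM.
  by exists M'; split; rewrite // properEneq eq_sym ne.
move: {2}#|~: F| (leqnn #|~: F|) => n; elim: n F => [|n IH] F le_n zF.
all: have [[F' [zF' ltFF']] | maxF] :=
  classic (exists F', is_zigzag E F' /\ F \proper F');
  last by exists F; [exact: maximal | exact: subxx].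
all: have ltC := proper_card (etrans (properC F F') ltFF').
- by move: (leq_trans ltC le_n).
- have [|M maxM sF'M] := IH F' _ zF'; first by rewrite -ltnS (leq_trans ltC).
  by exists M; rewrite // (subset_trans (proper_sub ltFF')).
Qed.

Lemma max_zigzag_eq M1 M2 : max_zigzag E M1 -> max_zigzag E M2 -> M1 :&: M2 != set0 ->
  M1 = M2.
Proof.
move=> [zM1 maxM1] [zM2 maxM2] meet; have zU := zigzag_setU zM1 zM2 meet.
by rewrite -(maxM1 _ zU (subsetUl _ _)) (maxM2 _ zU (subsetUr _ _)).
Qed.

Lemma max_zigzag_closed M e f : max_zigzag E M -> e \in M -> f \in E -> zz e f ->
  f \in M.
Proof.
move=> [zM maxM] eM fE ef.
by rewrite -(maxM _ (zigzag_setU1 zM fE eM ef) (subsetUr _ _)) setU11.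
Qed.

Variable Zs : {set {set V * V}}.
Hypothesis Zs_max : forall F, F \in Zs <-> max_zigzag E F.

Lemma Zs_sub F : F \in Zs -> F \subset E.
Proof. by move/Zs_max => [[]]. Qed.

Lemma Zs_cover e : e \in E -> exists2 F, F \in Zs & e \in F.
Proof.
move=> eE; have [M maxM sM] := max_zigzag_exists (zigzag1 eE).
by exists M; [apply/Zs_max | rewrite (subsetP sM) ?set11].
Qed.

Lemma Zs_disjoint F G e : F \in Zs -> G \in Zs -> e \in F -> e \in G -> F = G.
Proof.
move=> /Zs_max maxF /Zs_max maxG eF eG.
by apply: max_zigzag_eq maxF maxG _; apply/set0Pn; exists e; rewrite inE eF.
Qed.

Lemma Zs_closed F e f : F \in Zs -> e \in F -> f \in E -> zz e f -> f \in F.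
Proof. by move/Zs_max; apply: max_zigzag_closed. Qed.

Lemma Zs_partition : partition Zs E.
Proof.
apply/and3P; split.
- rewrite eqEsubset; apply/andP; split; first by apply/bigcupsP => F /Zs_sub.
  by apply/subsetP => e /Zs_cover[F FZ eF]; apply/bigcupP; exists F.
- apply/trivIsetP => F G FZ GZ; apply: contraNT; rewrite -setI_eq0 => /set0Pn[e].
  by rewrite inE => /andP[eF eG]; rewrite (Zs_disjoint FZ GZ eF eG).
- by apply: contraT; rewrite negbK => /Zs_max[/zigzag_neq0]; rewrite eqxx.
Qed.

Lemma admA_sub F T : admA E F T -> T \subset F.
Proof. by case/and3P. Qed.

Lemma admA_local S : S \subset E ->
  admA E E S <-> forall F, F \in Zs -> admA E F (S :&: F).
Proof.
move=> sSE; split.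
- case/and3P=> _ /forall_inP forced /forall_inP pairs F FZ.
  have FE e : e \in F -> e \in E := subsetP (Zs_sub FZ) e.
  apply/and3P; split; first exact: subsetIr.
  + by apply/forall_inP => e eF; rewrite inE eF andbT; apply: forced (FE e eF).
  + apply/forall_inP => e1 e1F; apply/forall_inP => e2 e2F; rewrite !inE e1F e2F !andbT.
    exact: (forall_inP (pairs e1 (FE e1 e1F)) e2 (FE e2 e2F)).
- move=> loc; apply/and3P; split => //.
  + apply/forall_inP => e eE; have [F FZ eF] := Zs_cover eE.
    by case/and3P: (loc F FZ) => _ /forall_inP/(_ e eF); rewrite inE eF andbT.
  + apply/forall_inP => e1 e1E; apply/forall_inP => e2 e2E.
    apply/implyP => /andP[ne adj]; have [F FZ e1F] := Zs_cover e1E.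
    have e2F : e2 \in F by apply: (Zs_closed FZ e1F e2E); rewrite /zz_rel orbC.
    case/and3P: (loc F FZ) => _ _ /forall_inP/(_ e1 e1F)/forall_inP/(_ e2 e2F).
    by rewrite ne adj !inE e1F e2F !andbT.
Qed.

Definition splice (S F T : {set V * V}) := (S :\: F) :|: T.

Lemma spliceI S F G T : F \in Zs -> G \in Zs -> T \subset F ->
  splice S F T :&: G = if G == F then T else S :&: G.
Proof.
move=> FZ GZ sTF; apply/setP => e; have TF := subsetP sTF e.
have [-> | neGF] := eqVneq G F; rewrite !inE.
  case eT: (e \in T); first by rewrite orbT TF.
  by rewrite orbF andbAC andNb.
case eG: (e \in G); rewrite ?andbF ?andbT //.
have eNF : e \notin F.
  by apply: contraNN neGF => eF; rewrite (Zs_disjoint GZ FZ eG eF).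
case eT: (e \in T); last by rewrite orbF eNF.
by move: eNF; rewrite TF.
Qed.

Lemma splice_admA S F T : S \subset E -> admA E E S -> F \in Zs -> admA E F T ->
  admA E E (splice S F T).
Proof.
move=> sSE /(admA_local sSE) admS FZ admT; have sTF := admA_sub admT.
have sSpE : splice S F T \subset E.
  by rewrite subUset (subset_trans (subsetDl _ _) sSE) (subset_trans sTF (Zs_sub FZ)).
apply/(admA_local sSpE) => G GZ; rewrite spliceI //.
by case: eqP => [-> | _]; [exact: admT | exact: admS].
Qed.

Lemma card_splice S F T : #|splice S F T| <= #|S :\: F| + #|T|.
Proof. exact: leq_card_setU. Qed.

Lemma splice_proper S F T : T \proper S :&: F -> splice S F T \proper S.
Proof.
case/properP => sTSF [e eSF eNT]; move: eSF; rewrite inE => /andP[eS eF].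
apply/properP; split; last by exists e; rewrite // !inE eF eNT.
by rewrite subUset subsetDl (subset_trans sTSF (subsetIl _ _)).
Qed.

Lemma card_Zs_sum S : S \subset E -> #|S| = \sum_(F in Zs) #|S :&: F|.
Proof.
move=> sSE; transitivity (\sum_(e in E | e \in S) 1).
  rewrite sum1dep_card; apply: eq_card => e; rewrite !inE.
  by case eS: (e \in S); rewrite ?andbF ?andbT ?(subsetP sSE e eS).
rewrite (set_partition_big_cond _ Zs_partition); apply: eq_bigr => F _.
by rewrite sum1dep_card; apply: eq_card => e; rewrite !inE andbC.
Qed.

Lemma minimal_local S : S \subset E ->
  S \in adm_family E E KB <-> forall F, F \in Zs -> S :&: F \in adm_family E F KB.
Proof.
move=> sSE; rewrite inE; split.
- case/andP=> admS /forallP minS F FZ; rewrite inE (admA_local sSE).1 //=.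
  apply/forallP => T; apply/implyP => ltT; apply/negP => admT.
  move: (minS (splice S F T)); rewrite splice_proper //= splice_admA //.
- move=> loc; have admS : admA E E S.
    by apply/(admA_local sSE) => F /loc; rewrite inE => /andP[].
  rewrite admS; apply/forallP => S'; apply/implyP => ltS'; apply/negP => admS'.
  have [sS'S [e eS eNS']] := properP ltS'; have [F FZ eF] := Zs_cover (subsetP sSE e eS).
  have := loc F FZ; rewrite inE => /andP[_ /forallP/(_ (S' :&: F))].
  rewrite ((admA_local (subset_trans sS'S sSE)).1 admS' F FZ) implybF => /negP; apply.
  by apply/properP; split; [exact: setSI | exists e; rewrite !inE ?eS ?eF ?(negbTE eNS')].
Qed.

Lemma minimum_local S : S \subset E ->
  S \in adm_family E E KC <-> forall F, F \in Zs -> S :&: F \in adm_family E F KC.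
Proof.
move=> sSE; rewrite inE; split.
- case/andP=> admS /forallP minS F FZ; rewrite inE (admA_local sSE).1 //=.
  apply/forallP => T; apply/implyP => admT.
  move/implyP: (minS (splice S F T)) => /(_ (splice_admA sSE admS FZ admT)).
  move/leq_trans/(_ (card_splice S F T)).
  by rewrite -(cardsID F S) addnC leq_add2l.
- move=> loc; have admS : admA E E S.
    by apply/(admA_local sSE) => F /loc; rewrite inE => /andP[].
  rewrite admS; apply/forallP => S'; apply/implyP => admS'.
  have sS'E := admA_sub admS'; rewrite (card_Zs_sum sSE) (card_Zs_sum sS'E).
  apply: leq_sum => F FZ.
  have := loc F FZ; rewrite inE => /andP[_ /forallP/(_ (S' :&: F))].
  by rewrite ((admA_local sS'E).1 admS' F FZ).
Qed.

Lemma adm_family_local S k : S \subset E ->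
  S \in adm_family E E k <-> forall F, F \in Zs -> S :&: F \in adm_family E F k.
Proof.
move=> sSE; case: k; [| exact: minimal_local | exact: minimum_local].
by rewrite inE (admA_local sSE); split=> loc F /loc; rewrite inE.
Qed.

Lemma adm_family_sub F S k : S \in adm_family E F k -> S \subset F.
Proof. by case: k; rewrite inE; [| case/andP | case/andP] => /admA_sub. Qed.

Variables (d : nat) (Z : 'I_d -> {set V * V}).
Hypotheses (Z_inj : injective Z) (Z_enum : forall F, F \in Zs <-> exists i, Z i = F).

Lemma Z_Zs i : Z i \in Zs.
Proof. by apply/Z_enum; exists i. Qed.

Lemma bigcup_trailI (f : 'I_d -> {set V * V}) j : (forall i, f i \subset Z i) ->
  (\bigcup_(i < d) f i) :&: Z j = f j.
Proof.
move=> sf; apply/setP => e; rewrite inE; apply/andP/idP => [[/bigcupP[i _ ei] ej] | ej].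
  by rewrite -(Z_inj (Zs_disjoint (Z_Zs i) (Z_Zs j) (subsetP (sf i) e ei) ej)).
by split; [apply/bigcupP; exists j | exact: (subsetP (sf j))].
Qed.

Lemma adm_family_prod k : adm_family E E k =
  [set \bigcup_(i < d) S i | S : {ffun 'I_d -> {set V * V}}
                           & [forall i, S i \in adm_family E (Z i) k]].
Proof.
apply/setP => S; apply/idP/imsetP.
- move=> admS; have sSE := adm_family_sub admS.
  exists [ffun i => S :&: Z i].
    rewrite inE; apply/forallP => i; rewrite ffunE.
    exact: (adm_family_local k sSE).1 (Z_Zs i).
  apply/setP => e; apply/idP/bigcupP => [eS | [i _]];
    last by rewrite ffunE inE => /andP[].
  have [F FZ eF] := Zs_cover (subsetP sSE e eS); have [i ZiF] := (Z_enum F).1 FZ.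
  by exists i; rewrite // ffunE inE eS ZiF.
- case=> f; rewrite inE => /forallP admf ->.
  have sf i : f i \subset Z i := adm_family_sub (admf i).
  have sE : \bigcup_(i < d) f i \subset E.
    by apply/bigcupsP => i _; apply: subset_trans (sf i) (Zs_sub (Z_Zs i)).
  by apply/(adm_family_local k sE) => F /Z_enum[j <-]; rewrite bigcup_trailI.
Qed.

Lemma card_adm_family k : #|adm_family E E k| = \prod_(i < d) #|adm_family E (Z i) k|.
Proof.
rewrite adm_family_prod card_in_imset.
  rewrite (@eq_card _ _ (family (fun i => mem (adm_family E (Z i) k)))).
    by rewrite card_family foldrE big_map big_enum.
  by move=> f; rewrite !inE; apply/forallP/familyP.
move=> f g; rewrite !inE => /forallP admf /forallP admg fg; apply/ffunP => i.
have sf i' : f i' \subset Z i' := adm_family_sub (admf i').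
have sg i' : g i' \subset Z i' := adm_family_sub (admg i').
by rewrite -(bigcup_trailI _ sf) -(bigcup_trailI _ sg) fg.
Qed.

End Trails.

Theorem theorem4p2 (V : finType) (p : nat) (X : {set V}) (E : {set V * V})
    (Zs : {set {set V * V}}) (k : kind) :
  1 <= p -> is_network p X E ->
  (forall F, F \in Zs <-> max_zigzag E F) ->
  [/\ partition Zs E,
      (* (1) *) adm_family E E k = supp_family p X E k,
      (* (2) *) (forall S : {set V * V}, S \subset E ->
                   (S \in supp_family p X E k <->
                    (forall F, F \in Zs -> S :&: F \in adm_family E F k))),
      (* (3) *) (forall (d : nat) (Z : 'I_d -> {set V * V}), injective Z ->
                   (forall F, F \in Zs <-> exists i, Z i = F) ->
                   supp_family p X E k =
                   [set \bigcup_(i < d) S i | S : {ffun 'I_d -> {set V * V}}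
                      & [forall i, S i \in adm_family E (Z i) k]])
    & (* (4) *) (forall (d : nat) (Z : 'I_d -> {set V * V}), injective Z ->
                   (forall F, F \in Zs <-> exists i, Z i = F) ->
                   #|supp_family p X E k| = \prod_(i < d) #|adm_family E (Z i) k|)].
Proof.
move=> _ netE Zs_max; have deg_le2 v := network_deg_le2 v netE.
rewrite (supp_family_adm k netE); split.
- exact: (Zs_partition deg_le2 Zs_max).
- by [].
- by move=> S; exact: (adm_family_local deg_le2 Zs_max).
- by move=> d Z Z_inj Z_enum; apply: (adm_family_prod deg_le2 Zs_max Z_inj Z_enum).
- by move=> d Z Z_inj Z_enum; apply: (card_adm_family deg_le2 Zs_max Z_inj Z_enum).
Qed.
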